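(* Let $g:\mathbb{C}\to\mathbb{C}$ (with $\mathbb{C}\cong\mathbb{R}^2$) be a homeomorphism topologically conjugate to the reverse homothety $z\mapsto\bar z/2$. Then $g$ satisfies the topological shadowing property.
   Context: Let $(X,d)$ be a metric space and $f:X\to X$ a homeomorphism; $\mathcal{C}^+=\{\epsilon:X\to\mathbb{R}^+ : \epsilon \text{ continuous}\}$. For $\delta\in\mathcal{C}^+$, a sequence $\{x_n\}_{n\in\mathbb{Z}}\subset X$ is a $\delta$-pseudo-orbit of $f$ if $d(f(x_n),x_{n+1})<\delta(f(x_n))$ for every $n\in\mathbb{Z}$. For $\epsilon\in\mathcal{C}^+$, the sequence $\{x_n\}$ is $\epsilon$-shadowed by an orbit if there is $y\in X$ with $d(f^n(y),x_n)<\epsilon(x_n)$ for every $n\in\mathbb{Z}$. The homeomorphism $f$ satisfies the topological shadowing property if for every $\epsilon\in\mathcal{C}^+$ there exists $\delta\in\mathcal{C}^+$ such that every $\delta$-pseudo-orbit is $\epsilon$-shadowed by an orbit. $\mathbb{C}$ carries the Euclidean metric. *)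

From Stdlib Require Import Reals ZArith.
Open Scope R_scope.

Definition pt : Type := (R * R)%type.

Definition dist (p q : pt) : R :=
  sqrt ((fst p - fst q) ^ 2 + (snd p - snd q) ^ 2).

Definition cont_map (f : pt -> pt) : Prop :=
  forall x e, 0 < e -> exists d, 0 < d /\
    forall y, dist x y < d -> dist (f x) (f y) < e.

Definition is_homeomorphism (f finv : pt -> pt) : Prop :=
  cont_map f /\ cont_map finv /\
  (forall x, finv (f x) = x) /\ (forall y, f (finv y) = y).

Definition pos_cont (eps : pt -> R) : Prop :=
  (forall x, 0 < eps x) /\
  (forall x e, 0 < e -> exists d, 0 < d /\
     forall y, dist x y < d -> Rabs (eps x - eps y) < e).

Definition zpow (f finv : pt -> pt) (n : Z) (x : pt) : pt :=
  match n with
  | Z0 => x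
  | Zpos p => Nat.iter (Pos.to_nat p) f x
  | Zneg p => Nat.iter (Pos.to_nat p) finv x
  end.

Definition pseudo_orbit (f : pt -> pt) (delta : pt -> R) (xs : Z -> pt) : Prop :=
  forall n : Z, dist (f (xs n)) (xs (n + 1)%Z) < delta (f (xs n)).

Definition eps_shadowed (f finv : pt -> pt) (eps : pt -> R) (xs : Z -> pt) : Prop :=
  exists y : pt, forall n : Z, dist (zpow f finv n y) (xs n) < eps (xs n).

Definition topological_shadowing (f finv : pt -> pt) : Prop :=
  forall eps, pos_cont eps ->
    exists delta, pos_cont delta /\
      forall xs, pseudo_orbit f delta xs -> eps_shadowed f finv eps xs.

Definition rev_homothety (z : pt) : pt := (fst z / 2, - snd z / 2).

From Stdlib Require Import Reals ZArith Lra Lia Psatz Classical Rgeom.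
From Coquelicot Require Import Series Hierarchy.
(* Imported last so that [dist] is the Euclidean distance of [Defs], not that of [Rlimit]. *)
From Pilot Require Import Defs.
Open Scope R_scope.

(* Shadowing is invariant under topological conjugacy: the variable accuracies
   are transported through the conjugacy [h] with continuous positive moduli of
   continuity of [h] and [h^-1].  So it suffices to shadow pseudo-orbits of
   [f z = conj(z)/2].  Its linear part has norm [1/2], so the true orbit is
   obtained coordinatewise as [z_n = u_n - sum_k A^k e_(n-1-k)], where [e] are
   the jumps of the pseudo-orbit [u].  The series converges against the
   variable accuracy once the accuracy is replaced by a 1-Lipschitz minorant
   [mu] that does not decrease along orbits of [f]: then [mu] grows at most
   geometrically with ratio [8/7] backwards along the pseudo-orbit, which the
   contraction [1/2] beats. *)

Notation f := rev_homothety.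

Definition origin : pt := (0, 0).

Lemma dist_euc_eq p q : dist p q = dist_euc (fst p) (snd p) (fst q) (snd q).
Proof. unfold dist, dist_euc. now rewrite !Rsqr_pow2. Qed.

Lemma dist_nonneg p q : 0 <= dist p q.
Proof. apply sqrt_pos. Qed.

Lemma dist_sym p q : dist p q = dist q p.
Proof. rewrite !dist_euc_eq. apply distance_symm. Qed.

Lemma dist_refl p : dist p p = 0.
Proof. rewrite dist_euc_eq. apply distance_refl. Qed.

Lemma dist_triangle a b c : dist a c <= dist a b + dist b c.
Proof. rewrite !dist_euc_eq. apply triangle. Qed.

Lemma Rabs_fst_le_dist p q : Rabs (fst p - fst q) <= dist p q.
Proof.
  unfold dist. rewrite <- (sqrt_pow2 (Rabs (fst p - fst q))), pow2_abs by apply Rabs_pos.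
  apply sqrt_le_1_alt. assert (H := pow2_ge_0 (snd p - snd q)). lra.
Qed.

Lemma Rabs_snd_le_dist p q : Rabs (snd p - snd q) <= dist p q.
Proof.
  unfold dist. rewrite <- (sqrt_pow2 (Rabs (snd p - snd q))), pow2_abs by apply Rabs_pos.
  apply sqrt_le_1_alt. assert (H := pow2_ge_0 (fst p - fst q)). lra.
Qed.

Lemma dist_lt_of_coords p q m : 0 < m ->
  Rabs (fst p - fst q) <= m / 3 -> Rabs (snd p - snd q) <= m / 3 -> dist p q < m.
Proof.
  intros Hm Hx Hy. unfold dist. rewrite <- (sqrt_pow2 m) by lra.
  apply sqrt_lt_1_alt. rewrite <- (pow2_abs (fst p - fst q)), <- (pow2_abs (snd p - snd q)).
  assert (H1 := Rabs_pos (fst p - fst q)). assert (H2 := Rabs_pos (snd p - snd q)).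
  split; nra.
Qed.

Lemma dist_rev_homothety a b : dist (f a) (f b) = dist a b / 2.
Proof.
  unfold dist, rev_homothety; cbn [fst snd].
  replace ((fst a / 2 - fst b / 2) ^ 2 + (- snd a / 2 - - snd b / 2) ^ 2)
    with (((fst a - fst b) ^ 2 + (snd a - snd b) ^ 2) * (/ 2) ^ 2) by field.
  assert (H1 := pow2_ge_0 (fst a - fst b)). assert (H2 := pow2_ge_0 (snd a - snd b)).
  rewrite sqrt_mult, sqrt_pow2 by (lra || apply pow2_ge_0). field.
Qed.

Lemma dist_iter_rev_homothety k a b :
  dist (Nat.iter k f a) (Nat.iter k f b) = dist a b / 2 ^ k.
Proof.
  induction k as [|k IH]; simpl.
  - field.
  - rewrite dist_rev_homothety, IH. field. apply pow_nonzero. lra.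
Qed.

Lemma iter_rev_homothety_origin k : Nat.iter k f origin = origin.
Proof.
  induction k as [|k IH]; simpl; [easy|].
  rewrite IH. unfold rev_homothety, origin; simpl. f_equal; field.
Qed.

Lemma iter_rev_homothety_near_origin a r : 0 < r ->
  exists N, forall k, (N <= k)%nat -> dist (Nat.iter k f a) origin < r.
Proof.
  intros Hr. assert (Ha := dist_nonneg a origin).
  destruct (pow_lt_1_zero (/ 2) ltac:(rewrite Rabs_right; lra) (r / (dist a origin + 1)))
    as [N HN].
  { apply Rdiv_lt_0_compat; lra. }
  exists N. intros k Hk.
  rewrite <- (iter_rev_homothety_origin k), dist_iter_rev_homothety.
  specialize (HN k Hk). rewrite Rabs_right, pow_inv in HN by (apply Rle_ge, pow_le; lra).
  assert (H2k : 0 < / 2 ^ k) by (apply Rinv_0_lt_compat, pow_lt; lra).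
  apply Rmult_lt_compat_r with (r := dist a origin + 1) in HN; [|lra].
  unfold Rdiv in *. rewrite Rmult_assoc, Rinv_l in HN by lra. nra.
Qed.

Lemma pos_cont_scale_lipschitz (m : pt -> R) (c : R) : 0 < c ->
  (forall a, 0 < m a) -> (forall a a', m a <= m a' + dist a a') ->
  pos_cont (fun a => c * m a).
Proof.
  intros Hc Hpos Hlip. split.
  - intros a. specialize (Hpos a). nra.
  - intros x e He. exists (e / c). split; [apply Rdiv_lt_0_compat; lra|].
    intros y Hxy.
    assert (Hxy' : Rabs (m x - m y) <= dist x y).
    { apply Rabs_le. assert (H1 := Hlip x y). assert (H2 := Hlip y x).
      rewrite dist_sym in H2. lra. }
    rewrite <- Rmult_minus_distr_l, Rabs_mult, (Rabs_right c) by lra.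
    apply Rle_lt_trans with (c * dist x y); [nra|].
    replace e with (c * (e / c)) by (field; lra). nra.
Qed.

Lemma pos_cont_local_radius (rho : pt -> R) : pos_cont rho ->
  forall c, exists r, 0 < r /\ forall b, dist c b < r -> r <= rho b.
Proof.
  intros [Hpos Hcont] c. assert (Hc := Hpos c).
  destruct (Hcont c (rho c / 2)) as [eta [Heta Hnear]]; [lra|].
  exists (Rmin eta (rho c / 2)). split; [apply Rmin_pos; lra|].
  intros b Hb. assert (H1 := Rmin_l eta (rho c / 2)). assert (H2 := Rmin_r eta (rho c / 2)).
  assert (H3 := Hnear b ltac:(lra)). apply Rabs_def2 in H3. lra.
Qed.

Lemma pos_cont_uniform_radius_finite (rho : pt -> R) (p : nat -> pt) K : pos_cont rho ->
  exists r, 0 < r /\ forall k, (k < K)%nat -> forall b, dist (p k) b < r -> r <= rho b.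
Proof.
  intros Hrho. induction K as [|K [r1 [Hr1 H1]]].
  - exists 1. split; [lra | intros k Hk; lia].
  - destruct (pos_cont_local_radius rho Hrho (p K)) as [r2 [Hr2 H2]].
    exists (Rmin r1 r2). split; [apply Rmin_pos; auto|].
    assert (H3 := Rmin_l r1 r2). assert (H4 := Rmin_r r1 r2).
    intros k Hk b Hb. destruct (Nat.eq_dec k K) as [->|Hne].
    + assert (r2 <= rho b) by (apply H2; lra). lra.
    + assert (r1 <= rho b) by (apply (H1 k); [lia|lra]). lra.
Qed.

(* Moving the centre by [d] costs at most [d] of admissible radius, which makes
   the supremum of the admissible radii (capped at 1) 1-Lipschitz. *)
Section AdmissibleRadius.

Variable G : pt -> R -> Prop.
Hypothesis G_exists : forall a, exists r, 0 < r /\ G a r.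
Hypothesis G_shrink : forall a r r', G a r -> 0 < r' <= r -> G a r'.
Hypothesis G_shift : forall a a' r, G a r -> dist a a' < r -> G a' (r - dist a a').

Definition admissible (a : pt) (r : R) : Prop := 0 < r <= 1 /\ G a r.

Lemma admissible_bound a : bound (admissible a).
Proof. exists 1. intros r [Hr _]. lra. Qed.

Lemma admissible_inhabited a : exists r, admissible a r.
Proof.
  destruct (G_exists a) as [r [Hr HG]]. exists (Rmin r 1).
  assert (H1 := Rmin_l r 1). assert (H2 := Rmin_r r 1). assert (H3 : 0 < Rmin r 1) by (apply Rmin_pos; lra).
  split; [lra|]. apply G_shrink with r; auto.
Qed.

Definition radius (a : pt) : R :=
  proj1_sig (completeness (admissible a) (admissible_bound a) (admissible_inhabited a)).

Lemma radius_lub a : is_lub (admissible a) (radius a).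
Proof. unfold radius. now destruct completeness. Qed.

Lemma radius_ge a r : 0 < r <= 1 -> G a r -> r <= radius a.
Proof. intros Hr HG. apply (radius_lub a). now split. Qed.

Lemma radius_le a M : (forall r, 0 < r <= 1 -> G a r -> r <= M) -> radius a <= M.
Proof. intros HM. apply (radius_lub a). intros r [Hr HG]. auto. Qed.

Lemma radius_pos a : 0 < radius a.
Proof.
  destruct (admissible_inhabited a) as [r [Hr HG]].
  assert (r <= radius a) by (apply radius_ge; auto). lra.
Qed.

Lemma radius_lipschitz a a' : radius a <= radius a' + dist a a'.
Proof.
  apply radius_le. intros r Hr HG.
  assert (Hd := dist_nonneg a a'). assert (Hpos := radius_pos a').
  destruct (Rle_or_lt r (dist a a')); [lra|].
  assert (r - dist a a' <= radius a') by (apply radius_ge; [lra | now apply G_shift]).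
  lra.
Qed.

Lemma radius_half_admissible a : exists r, G a r /\ radius a / 2 < r.
Proof.
  apply NNPP. intro Hnone.
  assert (Hhalf : radius a <= radius a / 2).
  { apply radius_le. intros r _ HG. apply Rnot_lt_le. intro Hlt. apply Hnone. now exists r. }
  assert (Hpos := radius_pos a). lra.
Qed.

End AdmissibleRadius.

Lemma cont_map_pos_modulus (phi : pt -> pt) (theta : pt -> R) :
  cont_map phi -> pos_cont theta ->
  exists rho, pos_cont rho /\
    forall u v, dist u v < rho u -> dist (phi u) (phi v) < theta (phi u).
Proof.
  intros Hphi [Htpos Htcont].
  set (G := fun a r => forall b b', dist a b < r -> dist a b' < r ->
                         dist (phi b) (phi b') < theta (phi b)).
  assert (G_exists : forall a, exists r, 0 < r /\ G a r).
  { intros a. assert (Ht := Htpos (phi a)).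
    destruct (Htcont (phi a) (theta (phi a) / 2)) as [eta [Heta Hnear]]; [lra|].
    destruct (Hphi a (Rmin eta (theta (phi a) / 4))) as [r [Hr Hball]].
    { apply Rmin_pos; lra. }
    exists r. split; [easy|]. intros b b' Hb Hb'.
    assert (H1 := Hball b Hb). assert (H2 := Hball b' Hb').
    assert (H3 := Rmin_l eta (theta (phi a) / 4)). assert (H4 := Rmin_r eta (theta (phi a) / 4)).
    assert (H5 := Hnear (phi b) ltac:(lra)). apply Rabs_def2 in H5.
    assert (H6 := dist_triangle (phi b) (phi a) (phi b')).
    rewrite (dist_sym (phi b) (phi a)) in H6. lra. }
  assert (G_shrink : forall a r r', G a r -> 0 < r' <= r -> G a r').
  { intros a r r' HG Hr b b' Hb Hb'. apply HG; lra. }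
  assert (G_shift : forall a a' r, G a r -> dist a a' < r -> G a' (r - dist a a')).
  { intros a a' r HG Hd b b' Hb Hb'.
    assert (H1 := dist_triangle a a' b). assert (H2 := dist_triangle a a' b').
    apply HG; lra. }
  exists (fun a => / 2 * radius G G_exists G_shrink a). split.
  - apply pos_cont_scale_lipschitz; [lra | apply radius_pos | apply radius_lipschitz; auto].
  - intros u v Huv. destruct (radius_half_admissible G G_exists G_shrink u) as [r [HG Hr]].
    apply HG; [rewrite dist_refl; assert (H := radius_pos G G_exists G_shrink u); lra | lra].
Qed.

Lemma rev_homothety_orbit_radius (rho : pt -> R) : pos_cont rho -> forall a,
  exists r, 0 < r /\ forall k b, dist (Nat.iter k f a) b < r -> r <= rho b.
Proof.
  intros Hrho a.
  destruct (pos_cont_local_radius rho Hrho origin) as [r0 [Hr0 H0]].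
  destruct (iter_rev_homothety_near_origin a (r0 / 2)) as [N HN]; [lra|].
  destruct (pos_cont_uniform_radius_finite rho (fun k => Nat.iter k f a) N Hrho)
    as [r1 [Hr1 H1]].
  exists (Rmin r1 (r0 / 2)). split; [apply Rmin_pos; lra|].
  assert (H3 := Rmin_l r1 (r0 / 2)). assert (H4 := Rmin_r r1 (r0 / 2)).
  intros k b Hb. destruct (lt_dec k N) as [Hk|Hk].
  - assert (r1 <= rho b) by (apply (H1 k); [lia|lra]). lra.
  - assert (r0 <= rho b); [|lra]. apply H0.
    assert (H5 := HN k ltac:(lia)). rewrite dist_sym in H5.
    assert (H6 := dist_triangle origin (Nat.iter k f a) b). lra.
Qed.

(* [mu] is the largest radius admissible along the whole forward orbit. *)
Lemma rev_homothety_invariant_radius (rho : pt -> R) : pos_cont rho ->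
  exists mu : pt -> R,
    (forall a, 0 < mu a) /\ (forall a a', mu a <= mu a' + dist a a') /\
    (forall a, mu a <= rho a) /\ (forall a, mu a <= mu (f a)).
Proof.
  intros Hrho.
  set (G := fun a r => forall k b, dist (Nat.iter k f a) b < r -> r <= rho b).
  assert (G_exists : forall a, exists r, 0 < r /\ G a r)
    by exact (rev_homothety_orbit_radius rho Hrho).
  assert (G_shrink : forall a r r', G a r -> 0 < r' <= r -> G a r').
  { intros a r r' HG Hr k b Hb. assert (r <= rho b) by (apply (HG k); lra). lra. }
  assert (G_shift : forall a a' r, G a r -> dist a a' < r -> G a' (r - dist a a')).
  { intros a a' r HG Hd k b Hb. assert (Hnn := dist_nonneg a a').
    assert (r <= rho b); [|lra]. apply (HG k).
    assert (H1 := dist_triangle (Nat.iter k f a) (Nat.iter k f a') b).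
    rewrite dist_iter_rev_homothety in H1.
    assert (H2 : 1 <= 2 ^ k) by (apply pow_R1_Rle; lra).
    assert (dist a a' / 2 ^ k <= dist a a'); [|lra].
    apply Rmult_le_reg_r with (2 ^ k); [lra|].
    unfold Rdiv. rewrite Rmult_assoc, Rinv_l by lra. nra. }
  exists (radius G G_exists G_shrink). repeat split.
  - apply radius_pos.
  - now apply radius_lipschitz.
  - intros a. apply radius_le. intros r Hr HG.
    apply (HG 0%nat). simpl. rewrite dist_refl. lra.
  - intros a. apply radius_le. intros r Hr HG. apply radius_ge; [easy|].
    intros k b Hb. apply (HG (S k)). now rewrite Nat.iter_succ_r.
Qed.

Lemma geometric_series_bound (a : nat -> R) (C q : R) : 0 <= C -> 0 <= q < 1 ->
  (forall k, Rabs (a k) <= C * q ^ k) -> ex_series a /\ Rabs (Series a) <= C / (1 - q).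
Proof.
  intros HC Hq Ha.
  assert (Hgeom : is_series (fun k => C * q ^ k) (C / (1 - q))).
  { assert (H := is_series_geom q ltac:(rewrite Rabs_right; lra)).
    exact (is_series_scal_l C _ _ H). }
  assert (Habs : ex_series (fun k => Rabs (a k))).
  { apply (@ex_series_le R_AbsRing R_CompleteNormedModule) with (b := fun k => C * q ^ k).
    - intros k. unfold norm; simpl. unfold abs; simpl. now rewrite Rabs_Rabsolu.
    - now exists (C / (1 - q)). }
  split; [now apply ex_series_Rabs|].
  eapply Rle_trans; [now apply Series_Rabs|].
  rewrite <- (is_series_unique _ _ Hgeom). apply Series_le; [|now exists (C / (1 - q))].
  intros k. split; [apply Rabs_pos | apply Ha].
Qed.

(* The solution is [s n = sum_k c^k e (n-1-k)], summing the past jumps. *)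
Lemma backward_geometric_solution (c q : R) (e w : Z -> R) :
  0 <= q -> Rabs c * q < 1 ->
  (forall n k, Rabs (e (n - 1 - Z.of_nat k)%Z) <= w n * q ^ k) ->
  exists s : Z -> R, (forall n, s (n + 1)%Z = e n + c * s n) /\
    (forall n, Rabs (s n) <= w n / (1 - Rabs c * q)).
Proof.
  intros Hq Hcq He.
  set (a := fun n k => c ^ k * e (n - 1 - Z.of_nat k)%Z).
  assert (Ha : forall n, ex_series (a n) /\ Rabs (Series (a n)) <= w n / (1 - Rabs c * q)).
  { intros n. apply geometric_series_bound.
    - assert (H := He n 0%nat). rewrite pow_O, Rmult_1_r in H.
      assert (H' := Rabs_pos (e (n - 1 - Z.of_nat 0)%Z)). lra.
    - split; [apply Rmult_le_pos; [apply Rabs_pos | easy] | easy].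
    - intros k. unfold a. rewrite Rabs_mult, <- RPow_abs, Rpow_mult_distr.
      assert (Hck : 0 <= Rabs c ^ k) by (apply pow_le, Rabs_pos).
      assert (H := He n k). nra. }
  exists (fun n => Series (a n)). split.
  - intros n. rewrite Series_incr_1 by apply Ha. rewrite <- Series_scal_l. f_equal.
    + unfold a. rewrite pow_O, Rmult_1_l. f_equal. lia.
    + apply Series_ext. intros k. unfold a.
      replace (n + 1 - 1 - Z.of_nat (S k))%Z with (n - 1 - Z.of_nat k)%Z by lia.
      simpl. ring.
  - intros n. apply Ha.
Qed.

Definition orbit_shadowing (phi : pt -> pt) : Prop :=
  forall eps, pos_cont eps ->
    exists delta, pos_cont delta /\
      forall xs, pseudo_orbit phi delta xs ->
        exists z : Z -> pt, (forall n, z (n + 1)%Z = phi (z n)) /\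
          (forall n, dist (z n) (xs n) < eps (xs n)).

Lemma rev_homothety_orbit_shadowing : orbit_shadowing f.
Proof.
  intros rho Hrho.
  destruct (rev_homothety_invariant_radius rho Hrho) as [mu [Hpos [Hlip [Hle Hinv]]]].
  exists (fun a => / 8 * mu a). split; [apply pos_cont_scale_lipschitz; auto; lra|].
  intros u Hu.
  assert (Hmu_step : forall m, mu (f (u m)) < 8 / 7 * mu (u (m + 1)%Z)).
  { intros m. assert (H1 := Hlip (f (u m)) (u (m + 1)%Z)). assert (H2 := Hu m). lra. }
  assert (Hjump : forall m, dist (u (m + 1)%Z) (f (u m)) <= / 7 * mu (u (m + 1)%Z)).
  { intros m. rewrite dist_sym. assert (H1 := Hu m). assert (H2 := Hmu_step m). lra. }
  assert (Hgrowth : forall n k, mu (u (n - Z.of_nat k)%Z) <= mu (u n) * (8 / 7) ^ k).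
  { intros n k. induction k as [|k IH].
    - replace (n - Z.of_nat 0)%Z with n by lia. lra.
    - assert (H1 := Hmu_step (n - Z.of_nat (S k))%Z).
      assert (H2 := Hinv (u (n - Z.of_nat (S k))%Z)).
      replace (n - Z.of_nat (S k) + 1)%Z with (n - Z.of_nat k)%Z in H1 by lia.
      replace (mu (u n) * (8 / 7) ^ S k) with (8 / 7 * (mu (u n) * (8 / 7) ^ k))
        by (simpl; ring).
      lra. }
  assert (Hpast : forall n k, dist (u (n - 1 - Z.of_nat k + 1)%Z) (f (u (n - 1 - Z.of_nat k)%Z))
                              <= / 7 * mu (u n) * (8 / 7) ^ k).
  { intros n k. eapply Rle_trans; [apply Hjump|].
    replace (n - 1 - Z.of_nat k + 1)%Z with (n - Z.of_nat k)%Z by lia.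
    assert (H := Hgrowth n k). lra. }
  assert (Hrate : forall c, Rabs c = / 2 -> Rabs c * (8 / 7) = 4 / 7)
    by (intros c ->; field).
  destruct (backward_geometric_solution (/ 2) (8 / 7)
              (fun m => fst (u (m + 1)%Z) - fst (f (u m))) (fun n => / 7 * mu (u n)))
    as [sx [Hsx_rec Hsx_bound]]; [lra | rewrite Hrate; [lra | apply Rabs_right; lra] | |].
  { intros n k. eapply Rle_trans; [apply Rabs_fst_le_dist | apply Hpast]. }
  destruct (backward_geometric_solution (- / 2) (8 / 7)
              (fun m => snd (u (m + 1)%Z) - snd (f (u m))) (fun n => / 7 * mu (u n)))
    as [sy [Hsy_rec Hsy_bound]];
    [lra | rewrite Hrate; [lra | rewrite Rabs_Ropp; apply Rabs_right; lra] | |].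
  { intros n k. eapply Rle_trans; [apply Rabs_snd_le_dist | apply Hpast]. }
  rewrite Hrate in Hsx_bound by (apply Rabs_right; lra).
  rewrite Hrate in Hsy_bound by (rewrite Rabs_Ropp; apply Rabs_right; lra).
  exists (fun n => (fst (u n) - sx n, snd (u n) - sy n)). split.
  - intros n. rewrite Hsx_rec, Hsy_rec. unfold rev_homothety; simpl. f_equal; field.
  - intros n. eapply Rlt_le_trans; [|apply Hle]. apply dist_lt_of_coords; [apply Hpos| |]; simpl.
    + replace (fst (u n) - sx n - fst (u n)) with (- sx n) by ring.
      rewrite Rabs_Ropp. assert (H := Hsx_bound n). lra.
    + replace (snd (u n) - sy n - snd (u n)) with (- sy n) by ring.
      rewrite Rabs_Ropp. assert (H := Hsy_bound n). lra.
Qed.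

Lemma orbit_shadowing_conjugate (g h hinv phi : pt -> pt) :
  cont_map h -> cont_map hinv -> (forall x, hinv (h x) = x) -> (forall y, h (hinv y) = y) ->
  (forall z, h (g z) = phi (h z)) ->
  orbit_shadowing phi -> orbit_shadowing g.
Proof.
  intros Hh Hhinv Hhinv_h Hh_hinv Hconj Hphi eps Heps.
  destruct (cont_map_pos_modulus hinv eps Hhinv Heps) as [rho [Hrho Hrho_mod]].
  destruct (Hphi rho Hrho) as [sigma [Hsigma Hshadow]].
  destruct (cont_map_pos_modulus h sigma Hh Hsigma) as [delta [Hdelta Hdelta_mod]].
  exists delta. split; [easy|]. intros xs Hxs.
  destruct (Hshadow (fun n => h (xs n))) as [z [Hz_orbit Hz_close]].
  { intros n. rewrite <- Hconj. apply Hdelta_mod, Hxs. }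
  exists (fun n => hinv (z n)). split.
  - intros n. rewrite Hz_orbit, <- (Hh_hinv (z n)), <- Hconj, !Hhinv_h. easy.
  - intros n. rewrite dist_sym, <- (Hhinv_h (xs n)).
    apply Hrho_mod. rewrite dist_sym. apply Hz_close.
Qed.

Lemma zpow_orbit (g ginv : pt -> pt) (z : Z -> pt) :
  (forall x, ginv (g x) = x) -> (forall n, z (n + 1)%Z = g (z n)) ->
  forall n, zpow g ginv n (z 0%Z) = z n.
Proof.
  intros Hginv Hz.
  assert (Hforward : forall m, Nat.iter m g (z 0%Z) = z (Z.of_nat m)).
  { induction m as [|m IH]; [easy|].
    simpl Nat.iter. rewrite IH, <- Hz. f_equal. lia. }
  assert (Hbackward : forall m, Nat.iter m ginv (z 0%Z) = z (- Z.of_nat m)%Z).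
  { induction m as [|m IH]; [easy|].
    simpl Nat.iter. rewrite IH.
    replace (- Z.of_nat m)%Z with (- Z.of_nat (S m) + 1)%Z by lia.
    now rewrite Hz, Hginv. }
  intros [|p|p]; simpl; [easy | rewrite Hforward | rewrite Hbackward];
    now rewrite positive_nat_Z.
Qed.

Lemma topological_shadowing_of_orbit_shadowing (g ginv : pt -> pt) :
  (forall x, ginv (g x) = x) -> orbit_shadowing g -> topological_shadowing g ginv.
Proof.
  intros Hginv Hg eps Heps.
  destruct (Hg eps Heps) as [delta [Hdelta Hshadow]].
  exists delta. split; [easy|]. intros xs Hxs.
  destruct (Hshadow xs Hxs) as [z [Hz_orbit Hz_close]].
  exists (z 0%Z). intros n. rewrite zpow_orbit; auto.
Qed.

Theorem mainTheorem8 (g ginv h hinv : pt -> pt) :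
  is_homeomorphism g ginv ->
  is_homeomorphism h hinv ->
  (forall z, h (g z) = rev_homothety (h z)) ->
  topological_shadowing g ginv.
Proof.
  intros [_ [_ [Hginv _]]] [Hh [Hhinv [Hhinv_h Hh_hinv]]] Hconj.
  apply topological_shadowing_of_orbit_shadowing; [easy|].
  apply orbit_shadowing_conjugate with h hinv rev_homothety; auto.
  apply rev_homothety_orbit_shadowing.
Qed.
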